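(* Every Alster space is Hurewicz.
   Context: A topological space $X$ is Alster if every cover of $X$ by $G_\delta$ subsets of $X$ such that each compact subset of $X$ is included in some member of the cover has a countable subcover. A point-cofinite cover of a space is an infinite open cover such that each point of the space belongs to all but finitely many members of the cover. A space $X$ is Hurewicz if for each sequence $\{\mathcal{U}_n\}_{n<\omega}$ of open covers of $X$, none of which has a finite subcover, there are finite $\mathcal{F}_n\subseteq\mathcal{U}_n$ such that $\{\bigcup\mathcal{F}_n : n<\omega\}$ is a point-cofinite cover of $X$. No separation axioms are assumed. *)

(* topological spaces are [topologicalType]
   (no separation axioms assumed). *)
From HB Require Import structures.
From mathcomp Require Import all_boot all_order.
From mathcomp Require Import all_classical all_reals.
From mathcomp Require Import topology.
Set Implicit Arguments. Unset Strict Implicit. Unset Printing Implicit Defensive.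
Local Open Scope classical_set_scope.

Definition Gdelta {T : topologicalType} (A : set T) : Prop :=
  exists U : nat -> set T, (forall n, open (U n)) /\ A = \bigcap_n U n.

Definition is_cover {T : Type} (C : set (set T)) : Prop :=
  \bigcup_(A in C) A = setT.

Definition open_cover {T : topologicalType} (C : set (set T)) : Prop :=
  (forall A, C A -> open A) /\ is_cover C.

Definition has_finite_subcover {T : Type} (C : set (set T)) : Prop :=
  exists D, D `<=` C /\ finite_set D /\ is_cover D.

Definition has_countable_subcover {T : Type} (C : set (set T)) : Prop :=
  exists D, D `<=` C /\ countable D /\ is_cover D.

Definition Alster (T : topologicalType) : Prop :=
  forall C : set (set T),
    (forall A, C A -> Gdelta A) -> is_cover C ->
    (forall K : set T, compact K -> exists2 A, C A & K `<=` A) ->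
    has_countable_subcover C.

Definition point_cofinite_cover {T : topologicalType} (V : set (set T)) : Prop :=
  infinite_set V /\ open_cover V /\
  (forall x : T, finite_set [set A | V A /\ ~ A x]).

Definition Hurewicz (T : topologicalType) : Prop :=
  forall U : nat -> set (set T),
    (forall n, open_cover (U n)) ->
    (forall n, ~ has_finite_subcover (U n)) ->
    exists F : nat -> set (set T),
      (forall n, F n `<=` U n /\ finite_set (F n)) /\
      point_cofinite_cover (range (fun n => \bigcup_(A in F n) A)).

From HB Require Import structures.
From mathcomp Require Import all_boot.
From mathcomp Require Import finmap.
From mathcomp Require Import all_classical topology.
Set Implicit Arguments. Unset Strict Implicit. Unset Printing Implicit Defensive.
Local Open Scope classical_set_scope.

(** Given open covers [U n] without finite subcovers, consider the sets
    [\bigcap_n \bigcup (G n)] with [G n] a finite subfamily of [U n].  They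
    are G_delta, and by compactness every compact set lies in one of them, so
    the Alster property yields countably many of them, with selections
    [G_0, G_1, ...], covering the space.  The diagonal selection
    [F n := G_0 n \cup ... \cup G_n n] then eventually covers every point,
    while no [\bigcup (F n)] is the whole space; hence these unions form a
    point-cofinite cover. *)

(* [compact_cover] is only available on pointed spaces; any point will do. *)
Definition pointed_at (T : topologicalType) (x : T) : Type := T.
HB.instance Definition _ (T : topologicalType) (x : T) :=
  Topological.on (@pointed_at T x).
HB.instance Definition _ (T : topologicalType) (x : T) :=
  isPointed.Build (@pointed_at T x) x.

Lemma compact_cover_compact (T : topologicalType) (K : set T) :
  compact K -> cover_compact K.
Proof.
move=> cK; have [[x _]|K0] := pselect (K !=set0).
  by have : @compact (pointed_at x) K by []; rewrite compact_cover.
by move=> I D f _ _; exists fset0 => // y Ky; exfalso; apply: K0; exists y.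
Qed.

Lemma compact_finite_subcover (T : topologicalType) (V : set (set T))
    (K : set T) :
  open_cover V -> compact K ->
  exists G, [/\ G `<=` V, finite_set G & K `<=` \bigcup_(B in G) B].
Proof.
move=> [Vop Vcov] /compact_cover_compact cK.
have KV : K `<=` cover V id by move=> x _; rewrite /cover Vcov.
have [G GV KG] := cK _ V id Vop KV.
exists [set` G]; split; [|exact: finite_fset|exact: KG].
by move=> B /GV; rewrite inE.
Qed.

Lemma finite_set_nat_bounded (A : set nat) :
  finite_set A -> exists N, forall a, A a -> (a < N)%N.
Proof.
move=> /finite_seqP[s ->].
elim: s => [|x s [N HN]]; first by exists 0%N.
exists (maxn x.+1 N) => a /=; rewrite inE => /orP[/eqP->|as_].
  by rewrite leq_max ltnSn.
by rewrite leq_max (HN a) ?orbT.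
Qed.

Section Selections.
Context {T : Type} (U : nat -> set (set T)).

Definition finite_selection (G : nat -> set (set T)) : Prop :=
  forall n, G n `<=` U n /\ finite_set (G n).

Definition selection_kernel (G : nat -> set (set T)) : set T :=
  \bigcap_n \bigcup_(B in G n) B.

Definition diagonal_selection (Gs : nat -> nat -> set (set T)) (n : nat) :
  set (set T) := \bigcup_(i in `I_n.+1) Gs i n.

Lemma finite_selection0 : finite_selection (fun _ => set0).
Proof. by move=> n; split. Qed.

Lemma finite_selection_diagonal Gs :
  (forall i, finite_selection (Gs i)) ->
  finite_selection (diagonal_selection Gs).
Proof.
move=> FGs n; split; first by move=> B [i _ /(FGs i n).1].
by apply: bigcup_finite => [|i _]; [exact: finite_II | exact: (FGs i n).2].
Qed.

Lemma selection_kernel_sub_diagonal Gs i n : (i <= n)%N ->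
  selection_kernel (Gs i) `<=` \bigcup_(B in diagonal_selection Gs n) B.
Proof.
move=> le_in x /(_ n I) [B GB Bx].
by exists B => //; exists i => //=; rewrite ltnS.
Qed.

End Selections.

Section OpenSelections.
Variables (T : topologicalType) (U : nat -> set (set T)).
Hypothesis Uop : forall n, open_cover (U n).

Lemma open_selection_union G n : finite_selection U G ->
  open (\bigcup_(B in G n) B).
Proof. by move=> FG; apply: bigcup_open => B /(FG n).1; exact: (Uop n).1. Qed.

Lemma Gdelta_selection_kernel G : finite_selection U G ->
  Gdelta (selection_kernel G).
Proof.
by move=> FG; exists (fun n => \bigcup_(B in G n) B); split => // n;
  exact: open_selection_union.
Qed.

Lemma compact_sub_selection_kernel K : compact K ->
  exists2 G, finite_selection U G & K `<=` selection_kernel G.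
Proof.
move=> cK; have /choice[G HG] := fun n => compact_finite_subcover (Uop n) cK.
exists G => [n|x Kx n _]; first by case: (HG n).
by case: (HG n) => _ _; apply.
Qed.

Lemma Alster_countable_selections : Alster T ->
  exists2 Gs : nat -> nat -> set (set T),
    forall i, finite_selection U (Gs i) &
    \bigcup_i selection_kernel (Gs i) = setT.
Proof.
move=> Talster.
pose C := selection_kernel @` finite_selection U.
have Csub K : compact K -> exists2 A, C A & K `<=` A.
  move=> /compact_sub_selection_kernel[G FG KG].
  by exists (selection_kernel G) => //; exists G.
have [D [DC [Dcount Dcov]]] : has_countable_subcover C.
  apply: Talster => //; first by move=> _ [G FG <-]; exact: Gdelta_selection_kernel.
  apply/seteqP; split=> // x _.
  by have [A CA /(_ x erefl) Ax] := Csub _ (@compact_set1 T x); exists A.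
have /pcard_surjP[e De] := Dcount.
have /choice[Gs HGs] : forall i, exists G, finite_selection U G /\
    (D (e i) -> selection_kernel G = e i).
  move=> i; have [/DC[G FG <-]|nDe] := pselect (D (e i)); first by exists G.
  by exists (fun _ => set0); split=> [|/nDe//]; exact: finite_selection0.
exists Gs => [i|]; first exact: (HGs i).1.
apply/seteqP; split=> // x _; move: (I : setT x); rewrite -Dcov => -[A DA Ax].
by have [i _ eiA] := De A DA; exists i => //; rewrite (HGs i).2 eiA.
Qed.

End OpenSelections.

Section EventualCover.
Variables (T : Type) (V : nat -> set T).
Hypothesis Vev : forall x, exists k, forall n, (k <= n)%N -> V n x.

Lemma eventual_cover_is_cover : is_cover (range V).
Proof.
apply/seteqP; split=> // x _; have [k Vk] := Vev x.
by exists (V k); [exists k | exact: Vk].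
Qed.

Lemma eventual_cover_point_cofinite x :
  finite_set [set A | range V A /\ ~ A x].
Proof.
have [k Vk] := Vev x.
apply: (@sub_finite_set _ _ (V @` `I_k)); last exact: finite_image.
move=> A [[n _ <-] nVx]; exists n => //=.
by rewrite ltnNge; apply/negP => /Vk.
Qed.

(* Pick a point outside each of the finitely many members; for [N] beyond the
   indices from which these points are covered, [V N] contains its own point. *)
Lemma eventual_cover_infinite : (forall n, V n != setT) ->
  infinite_set (range V).
Proof.
move=> Vproper Vfin; have /setTPn[y0 _] := Vproper 0%N.
have /choice[p Hp] : forall A, exists y, range V A -> ~ A y.
  move=> A; have [[n _ <-]|nVA] := pselect (range V A); last by exists y0 => /nVA.
  by have /setTPn[y Vy] := Vproper n; exists y.
have /choice[k Hk] := Vev.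
have [N HN] := finite_set_nat_bounded (finite_image (k \o p) Vfin).
have VN : range V (V N) by exists N.
by apply: (Hp _ VN); apply/Hk/ltnW/HN; exists (V N).
Qed.

End EventualCover.

Lemma point_cofinite_cover_range (T : topologicalType) (V : nat -> set T) :
  (forall n, open (V n)) -> (forall n, V n != setT) ->
  (forall x, exists k, forall n, (k <= n)%N -> V n x) ->
  point_cofinite_cover (range V).
Proof.
move=> Vop Vproper Vev; split; first exact: eventual_cover_infinite.
split; last exact: eventual_cover_point_cofinite.
by split; [move=> _ [n _ <-] | exact: eventual_cover_is_cover].
Qed.

Theorem theorem2p3 (T : topologicalType) : Alster T -> Hurewicz T.
Proof.
move=> Talster U Uop Unf.
have [Gs FGs Gscov] := Alster_countable_selections Uop Talster.
have FF := finite_selection_diagonal FGs.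
exists (diagonal_selection Gs); split => //.
apply: point_cofinite_cover_range => [n|n|x].
- exact: open_selection_union.
- apply/negP => /eqP Fcov; apply: (Unf n).
  by exists (diagonal_selection Gs n); have [] := FF n.
- move: (I : setT x); rewrite -Gscov => -[i _ xi].
  by exists i => n /selection_kernel_sub_diagonal; apply.
Qed.
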